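(* Let $x_s<x_t$ be integers, let $C\ge 0$, and let $f:[x_s,x_t]\to\mathbb{R}$ be such that $([x_s,x_t],f)$ is an Ameso($C$) pair. Suppose there exist $x^0\in[x_s,x_t]$ and positive integers $b_1,b_2$ with $[x^0-b_2,x^0+b_1]\subseteq[x_s,x_t]$ such that $f(x^0)=\min_{y\in[x^0-b_2,x^0+b_1]}f(y)$, $f(x^0)+C\le\max_{y\in[x^0,x^0+b_1]}f(y)$, and $f(x^0)+C\le\max_{y\in[x^0-b_2,x^0]}f(y)$. Then $f(x^0)=\min_{y\in[x_s,x_t]}f(y)$.
   Context: For integers $a\le b$, $[a,b]$ denotes the set of integers $\{a,a+1,\dots,b\}$. Floors and ceilings of vectors are taken componentwise. A set $D^n\subseteq\mathbb{Z}^n$ is an Ameso set if $\lceil(\vec x+\vec y)/2\rceil,\lfloor(\vec x+\vec y)/2\rfloor\in D^n$ for all $\vec x,\vec y\in D^n$. For $C\ge 0$, $(D^n,f)$ is an Ameso($C$) pair if $D^n$ is an Ameso set, $f:D^n\to\mathbb{R}$ is bounded below, and $f(\vec x)+f(\vec y)+C\ge f(\lceil(\vec x+\vec y)/2\rceil)+f(\lfloor(\vec x+\vec y)/2\rfloor)$ for all $\vec x,\vec y\in D^n$. *)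

From Stdlib Require Import ZArith Reals.
Open Scope Z_scope.

Definition zfloor_mid (x y : Z) : Z := Z.div (x + y) 2.
Definition zceil_mid (x y : Z) : Z := - Z.div (- (x + y)) 2.

Definition zint (a b : Z) (x : Z) : Prop := a <= x <= b.

Definition ameso_set (D : Z -> Prop) : Prop :=
  forall x y, D x -> D y -> D (zceil_mid x y) /\ D (zfloor_mid x y).

(* (D, f) is an Ameso(C) pair; f is given on all of Z but only its values
   on D matter. *)
Definition ameso_pair (C : R) (D : Z -> Prop) (f : Z -> R) : Prop :=
  ameso_set D /\
  (exists m : R, forall x, D x -> (m <= f x)%R) /\
  (forall x y, D x -> D y ->
     (f (zceil_mid x y) + f (zfloor_mid x y) <= f x + f y + C)%R).

(** Indeed,
    if [f y < f x] with [x < y], the approximate midpoint convexity forces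
    every value strictly between [x] and [y] below [f x + C]: at the
    rightmost maximiser [m] of [f] on the open interval, reflect [x] through
    [m] (if [m] is in the left half) or [y] through [m] (otherwise) and
    compare the midpoint inequality with the choice of [m]. *)

From Stdlib Require Import ZArith Reals Lra Lia.

Definition midpoint_bounded (C : R) (a b : Z) (f : Z -> R) : Prop :=
  forall u v z, (a <= u <= b)%Z -> (a <= v <= b)%Z -> (u + v = 2 * z)%Z ->
    (2 * f z <= f u + f v + C)%R.

Lemma zfloor_mid_eq (u v z : Z) : (u + v = 2 * z)%Z -> zfloor_mid u v = z.
Proof.
  intro Huv. unfold zfloor_mid. rewrite Huv, Z.mul_comm. apply Z.div_mul. lia.
Qed.

Lemma zceil_mid_eq (u v z : Z) : (u + v = 2 * z)%Z -> zceil_mid u v = z.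
Proof.
  intro Huv. unfold zceil_mid. rewrite Huv.
  replace (- (2 * z))%Z with ((- z) * 2)%Z by ring.
  rewrite Z.div_mul by lia. ring.
Qed.

Lemma ameso_pair_midpoint_bounded (C : R) (a b : Z) (f : Z -> R) :
  ameso_pair C (zint a b) f -> midpoint_bounded C a b f.
Proof.
  intros [_ [_ Hmid]] u v z Hu Hv Huv.
  pose proof (Hmid u v Hu Hv) as Hf.
  rewrite (zceil_mid_eq u v z Huv), (zfloor_mid_eq u v z Huv) in Hf. lra.
Qed.

Lemma midpoint_bounded_sub (C : R) (a b a' b' : Z) (f : Z -> R) :
  (a <= a')%Z -> (b' <= b)%Z ->
  midpoint_bounded C a b f -> midpoint_bounded C a' b' f.
Proof. intros Ha Hb Hf u v z Hu Hv. apply Hf; lia. Qed.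

Lemma midpoint_bounded_opp (C : R) (a b : Z) (f : Z -> R) :
  midpoint_bounded C a b f -> midpoint_bounded C (- b) (- a) (fun t => f (- t)%Z).
Proof. intros Hf u v z Hu Hv Huv. apply Hf; lia. Qed.

Lemma exists_rightmost_argmax (f : Z -> R) (lo hi : Z) :
  (lo <= hi)%Z ->
  exists m, (lo <= m <= hi)%Z /\
    forall w, (lo <= w <= hi)%Z -> (f w <= f m)%R /\ ((m < w)%Z -> (f w < f m)%R).
Proof.
  intro Hle.
  replace hi with (lo + Z.of_nat (Z.to_nat (hi - lo)))%Z by lia.
  induction (Z.to_nat (hi - lo)) as [|n [m [Hm Hmax]]].
  - exists lo. split; [lia|]. intros w Hw.
    replace w with lo by lia. split; [lra | lia].
  - set (h := (lo + Z.of_nat (S n))%Z).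
    destruct (Rle_lt_dec (f m) (f h)) as [Hmh | Hhm].
    + exists h. split; [lia|]. intros w Hw. split; [|lia].
      destruct (Z.eq_dec w h) as [-> | Hne]; [lra|].
      destruct (Hmax w ltac:(lia)). lra.
    + exists m. split; [lia|]. intros w Hw.
      destruct (Z.eq_dec w h) as [-> | Hne]; [split; [lra | easy]|].
      apply Hmax; lia.
Qed.

Lemma midpoint_bounded_interior_lt (C : R) (f : Z -> R) (x y : Z) :
  (0 <= C)%R -> midpoint_bounded C x y f -> (f y < f x)%R ->
  forall z, (x < z < y)%Z -> (f z < f x + C)%R.
Proof.
  intros HC Hf Hy z Hz.
  destruct (exists_rightmost_argmax f (x + 1) (y - 1) ltac:(lia))
    as [m [Hm Hmax]].
  enough (f m < f x + C)%R by (destruct (Hmax z ltac:(lia)); lra).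
  destruct (Z_le_gt_dec (2 * m) (x + y)) as [Hleft | Hright].
  - set (b := (2 * m - x)%Z).
    assert (Hmid : (2 * f m <= f x + f b + C)%R) by (apply Hf; unfold b; lia).
    destruct (Z.eq_dec b y) as [Hb | Hb].
    + rewrite Hb in Hmid. lra.
    + destruct (Hmax b ltac:(unfold b in *; lia)) as [_ Hlt].
      specialize (Hlt ltac:(unfold b; lia)). lra.
  - set (a := (2 * m - y)%Z).
    assert (Hmid : (2 * f m <= f a + f y + C)%R) by (apply Hf; unfold a; lia).
    destruct (Hmax a ltac:(unfold a; lia)). lra.
Qed.

Lemma midpoint_bounded_min_right (C : R) (f : Z -> R) (x z y : Z) :
  (0 <= C)%R -> midpoint_bounded C x y f -> (x < z < y)%Z ->
  (forall w, (x <= w <= z)%Z -> (f x <= f w)%R) ->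
  (exists w, (x <= w <= z)%Z /\ (f x + C <= f w)%R) ->
  (f x <= f y)%R.
Proof.
  intros HC Hf Hz Hmin [w [Hw Hfw]].
  destruct (Rle_lt_dec (f x) (f y)) as [| Hy]; [assumption | exfalso].
  pose proof (midpoint_bounded_interior_lt C f x y HC Hf Hy) as Hint.
  destruct (Z.eq_dec w x) as [-> | Hne].
  - (* [w = x] forces [C <= 0]; argue with the neighbour [x + 1] instead *)
    pose proof (Hmin (x + 1)%Z ltac:(lia)).
    pose proof (Hint (x + 1)%Z ltac:(lia)). lra.
  - pose proof (Hint w ltac:(lia)). lra.
Qed.

Lemma midpoint_bounded_min_left (C : R) (f : Z -> R) (y z x : Z) :
  (0 <= C)%R -> midpoint_bounded C y x f -> (y < z < x)%Z ->
  (forall w, (z <= w <= x)%Z -> (f x <= f w)%R) ->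
  (exists w, (z <= w <= x)%Z /\ (f x + C <= f w)%R) ->
  (f x <= f y)%R.
Proof.
  intros HC Hf Hz Hmin [w [Hw Hfw]].
  pose proof (midpoint_bounded_min_right C (fun t => f (- t)%Z) (- x) (- z) (- y)
    HC (midpoint_bounded_opp C y x f Hf)) as Hrefl.
  cbv beta in Hrefl. rewrite !Z.opp_involutive in Hrefl.
  apply Hrefl; [lia | | exists (- w)%Z].
  - intros v Hv. rewrite <- (Z.opp_involutive v) in Hv |- *. apply Hmin. lia.
  - rewrite Z.opp_involutive. split; [lia | exact Hfw].
Qed.

Theorem theorem3 (xs xt : Z) (C : R) (f : Z -> R) :
  (xs < xt)%Z ->
  (0 <= C)%R ->
  ameso_pair C (zint xs xt) f ->
  forall (x0 b1 b2 : Z),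
    zint xs xt x0 ->
    (0 < b1)%Z -> (0 < b2)%Z ->
    (forall y, zint (x0 - b2) (x0 + b1) y -> zint xs xt y) ->
    (forall y, zint (x0 - b2) (x0 + b1) y -> (f x0 <= f y)%R) ->
    (exists y, zint x0 (x0 + b1) y /\ (f x0 + C <= f y)%R) ->
    (exists y, zint (x0 - b2) x0 y /\ (f x0 + C <= f y)%R) ->
    forall y, zint xs xt y -> (f x0 <= f y)%R.
Proof.
  unfold zint.
  intros _ HC Hpair x0 b1 b2 Hx0 Hb1 Hb2 Hwin Hmin Hright Hleft y Hy.
  pose proof (ameso_pair_midpoint_bounded C xs xt f Hpair) as Hf.
  destruct (Z_lt_le_dec (x0 + b1) y) as [Hfar_right | Hle_right].
  - apply (midpoint_bounded_min_right C f x0 (x0 + b1) y HC); [| lia | | exact Hright].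
    + apply (midpoint_bounded_sub C xs xt); [lia | lia | exact Hf].
    + intros w Hw. apply Hmin. lia.
  - destruct (Z_lt_le_dec y (x0 - b2)) as [Hfar_left | Hle_left].
    + apply (midpoint_bounded_min_left C f y (x0 - b2) x0 HC); [| lia | | exact Hleft].
      * apply (midpoint_bounded_sub C xs xt); [lia | lia | exact Hf].
      * intros w Hw. apply Hmin. lia.
    + apply Hmin. lia.
Qed.
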